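(* Let $k\in\{-1,0,1\}$, $\beta>0$, let $\delta_k>0$ be the positive real solution of $\delta^3+k\delta-\frac{3\beta}{2}=0$, and let $R_b>0$ (with $R_b<1$ if $k=1$). Define \[ R_{\mathrm{AH}}=\frac{1}{\sqrt{\delta_k^2+k}},\quad C_k=\frac{1}{\sqrt{1-kR_b^2}+\delta_kR_b},\quad x_\Sigma=\frac{R_b\delta_k}{C_k},\quad \lambda_1=\frac{\beta R_b^3}{C_k},\quad \lambda_2=\frac{\beta C_k^2}{2\delta_k^3}, \] $h(x)=1-\frac{\lambda_1}{x}-\lambda_2x^2$, $B(u,r)=h(r/u)$, and consider the metric \[ g_{\mathrm{ext}}=-B(u,r)\,du^2-2\,du\,dr+r^2d\Omega^2,\qquad u>0,\ r>x_\Sigma u. \] Then there exists $x_*>x_\Sigma$ such that the hypersurface $r=xu$ is spacelike for $x>x_*$, null for $x=x_*$ and timelike for $x_\Sigma<x<x_*$. If $R_b<R_{\mathrm{AH}}$ and $x_{\mathrm{AH}}>x_\Sigma$ denotes the value with $h(x_{\mathrm{AH}})=0$ (the exterior apparent horizon $r=x_{\mathrm{AH}}u$), then $x_*>x_{\mathrm{AH}}$. Moreover, the curve $r=x_*u$ is an ingoing radial null geodesic (a solution of $\frac{dr}{du}=-\frac12B(u,r)$), and every solution $r(u)$ of $\frac{dr}{du}=-\frac12B(u,r)$ with $r(u_0)<x_*u_0$ for some $u_0>0$ reaches the matching surface $r=x_\Sigma u$ at some finite $u>u_0$; consequently every ingoing radial null geodesic escaping to null infinity other than $r=x_*u$ satisfies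 $r(u)>x_*u$ for all $u>0$, i.e. $r=x_*u$ is the first ingoing radial null geodesic that escapes to null infinity.
   Context: This is the exterior (outgoing Vaidya type metric with mass $M(u)=\lambda_1u/2$ and cosmological scalar field $\Lambda(u)=3\lambda_2/u^2$) of the self-similar stellar model whose interior is $-dt^2+(\delta_kt)^2\big(\frac{dR^2}{1-kR^2}+R^2d\Omega^2\big)$, with matching surface $R=R_b$ in the interior and $r=x_\Sigma u$ in the exterior. The curves $r=xu$ are the homothetic curves. $d\Omega^2=d\theta^2+\sin^2\theta\,d\psi^2$. *)

From Stdlib Require Import Reals Lra.
From Coquelicot Require Import Coquelicot.
Open Scope R_scope.

Definition Ck (k delta Rb : R) : R := 1 / (sqrt (1 - k * Rb ^ 2) + delta * Rb).
Definition RAH (k delta : R) : R := 1 / sqrt (delta ^ 2 + k).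
Definition xSigma (k delta Rb : R) : R := Rb * delta / Ck k delta Rb.
Definition lambda1 (k beta delta Rb : R) : R := beta * Rb ^ 3 / Ck k delta Rb.
Definition lambda2 (k beta delta Rb : R) : R :=
  beta * (Ck k delta Rb) ^ 2 / (2 * delta ^ 3).

Definition hfun (l1 l2 x : R) : R := 1 - l1 / x - l2 * x ^ 2.
Definition Bfun (l1 l2 u r : R) : R := hfun l1 l2 (r / u).

Record vec4 := mkv { vu : R; vr : R; vth : R; vps : R }.
Definition vzero : vec4 := mkv 0 0 0 0.

(* g_ext = -B du^2 - 2 du dr + r^2 (dtheta^2 + sin^2 theta dpsi^2),
   evaluated at the point (u, r, theta, _) on vectors v, w *)
Definition gext (l1 l2 u r th : R) (v w : vec4) : R :=
  - Bfun l1 l2 u r * vu v * vu w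
  - (vu v * vr w + vr v * vu w)
  + r ^ 2 * (vth v * vth w + (sin th) ^ 2 * vps v * vps w).

Definition tangent_hyp (x : R) (v : vec4) : Prop := vr v = x * vu v.

(* Causal character of the hypersurface r = x u (via its induced metric),
   at every point with u > 0 and 0 < theta < pi (regular coordinates). *)
Definition spacelike_hyp (l1 l2 x : R) : Prop :=
  forall u th, 0 < u -> 0 < th < PI ->
  forall v, tangent_hyp x v -> v <> vzero -> 0 < gext l1 l2 u (x * u) th v v.

Definition null_hyp (l1 l2 x : R) : Prop :=
  forall u th, 0 < u -> 0 < th < PI ->
  exists v, tangent_hyp x v /\ v <> vzero /\
    forall w, tangent_hyp x w -> gext l1 l2 u (x * u) th v w = 0.

Definition timelike_hyp (l1 l2 x : R) : Prop :=
  forall u th, 0 < u -> 0 < th < PI ->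
  exists v, tangent_hyp x v /\ gext l1 l2 u (x * u) th v v < 0.

(* Everything is governed by [nullfun x = h x + 2 x]: the induced metric on [r = x u]
   has [du^2]-coefficient [- nullfun x], and along a solution of [dr/du = -B/2] the
   ratio [y = r/u] satisfies [u y' = - nullfun y / 2].  The function [nullfun] is
   concave on [(0, oo)], tends to [-oo], and [nullfun xSigma = 1 / C_k^2 > 0], so it
   has a unique root [x*] beyond [xSigma], with [nullfun > 0] before and [< 0] after.
   An apparent horizon has [nullfun xAH = 2 xAH > 0], hence lies below [x*].
   Below [x*], [y] decreases at rate at least [m / (2u)] with [m > 0] a lower bound of
   [nullfun], so it reaches [xSigma] in finite (logarithmic) time.  Above [x*], [y] is
   nondecreasing; a solution touching [r = x* u] equals [x* u] before the contact by
   monotonicity and after it by Gronwall's lemma, [nullfun] being locally Lipschitz. *)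

From Stdlib Require Import Reals Lra Psatz Classical.
From Coquelicot Require Import Coquelicot.
Open Scope R_scope.

Lemma real_induction (P : R -> Prop) (a b : R) :
  (forall t, a <= t <= b -> (forall s, a <= s < t -> P s) -> P t) ->
  (forall t, a <= t < b -> (forall s, a <= s <= t -> P s) ->
     exists d, 0 < d /\ forall s, t < s < t + d -> P s) ->
  forall t, a <= t <= b -> P t.
Proof.
  intros Hleft Hright t Ht.
  set (E := fun s => a <= s <= b /\ forall x, a <= x <= s -> P x).
  assert (Ea : E a).
  { split; [lra|]. intros x Hx. replace x with a by lra.
    apply Hleft; [lra|]. intros s Hs; lra. }
  assert (Eb : bound E) by (exists b; intros s [Hs _]; lra).
  destruct (completeness E Eb (ex_intro _ a Ea)) as [T [HT1 HT2]].
  assert (HaT : a <= T) by (apply HT1; exact Ea).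
  assert (HTb : T <= b) by (apply HT2; intros s [Hs _]; lra).
  assert (below_T : forall s, a <= s < T -> P s).
  { intros s Hs. apply NNPP. intros HPs.
    assert (T <= s); [|lra].
    apply HT2. intros e [He1 He2]. destruct (Rle_lt_dec e s) as [|Hse]; [lra|].
    exfalso. apply HPs, He2. lra. }
  assert (upto_T : forall s, a <= s <= T -> P s).
  { intros s Hs. destruct (Req_dec s T) as [->|]; [|apply below_T; lra].
    apply Hleft; [lra|exact below_T]. }
  destruct (Req_dec T b) as [<-|HTb']; [apply upto_T; lra|].
  exfalso. destruct (Hright T ltac:(lra) upto_T) as [d [Hd Hnext]].
  set (e := T + Rmin d (b - T) / 2).
  assert (0 < Rmin d (b - T)) by (apply Rmin_pos; lra).
  pose proof (Rmin_l d (b - T)). pose proof (Rmin_r d (b - T)).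
  assert (E e).
  { unfold e; split; [lra|]. intros x Hx.
    destruct (Rle_lt_dec x T); [apply upto_T; lra|apply Hnext; lra]. }
  assert (e <= T) by (apply HT1; auto). unfold e in *. lra.
Qed.

Lemma is_derive_continuity_pt f t l : is_derive f t l -> continuity_pt f t.
Proof.
  intros H. apply is_derive_Reals in H. apply derivable_continuous_pt. exists l. exact H.
Qed.

Lemma continuity_pt_le_left f a t c : a < t -> continuity_pt f t ->
  (forall s, a <= s < t -> f s <= c) -> f t <= c.
Proof.
  intros Hat Hc Hs. apply Rnot_lt_le. intros Hlt.
  destruct (Hc (f t - c) ltac:(lra)) as [al [Hal Hnear]].
  set (s := t - Rmin al (t - a) / 2).
  assert (0 < Rmin al (t - a)) by (apply Rmin_pos; lra).
  pose proof (Rmin_l al (t - a)). pose proof (Rmin_r al (t - a)).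
  assert (Hfs : Rabs (f s - f t) < f t - c).
  { apply Hnear. split; [split; [exact I|unfold s; lra]|].
    simpl. unfold R_dist, s. rewrite Rabs_left; lra. }
  assert (f s <= c) by (apply Hs; unfold s; lra).
  apply Rabs_def2 in Hfs. lra.
Qed.

Lemma continuity_pt_pos_right f t : continuity_pt f t -> 0 < f t ->
  exists d, 0 < d /\ forall s, t < s < t + d -> 0 < f s.
Proof.
  intros Hc Hpos. destruct (Hc (f t) Hpos) as [d [Hd Hnear]].
  exists d. split; [exact Hd|]. intros s Hs.
  assert (Hfs : Rabs (f s - f t) < f t).
  { apply Hnear. split; [split; [exact I|lra]|].
    simpl. unfold R_dist. rewrite Rabs_right; lra. }
  apply Rabs_def2 in Hfs. lra.
Qed.

Lemma is_derive_neg_right f t l : is_derive f t l -> l < 0 ->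
  exists d, 0 < d /\ forall s, t < s < t + d -> f s < f t.
Proof.
  intros H Hl. apply is_derive_Reals in H.
  destruct (H (- l) ltac:(lra)) as [[d Hd] Hnear].
  exists d. split; [exact Hd|]. intros s Hs.
  specialize (Hnear (s - t) ltac:(lra) ltac:(simpl; rewrite Rabs_right; lra)).
  replace (t + (s - t)) with s in Hnear by ring.
  apply Rabs_def2 in Hnear.
  assert (Hq : (f s - f t) / (s - t) < 0) by lra.
  apply Rnot_le_lt. intros Hle.
  assert (0 <= (f s - f t) / (s - t)) by (apply Rdiv_le_0_compat; lra). lra.
Qed.

Lemma pos_of_no_root (g : R -> R) (a : R) :
  0 < g a ->
  (forall t, a <= t -> (forall s, a <= s < t -> 0 < g s) -> continuity_pt g t) ->
  (forall t, a < t -> g t <> 0) ->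
  forall t, a <= t -> 0 < g t.
Proof.
  intros Ha Hcont Hroot t Ht. apply (real_induction (fun s => 0 < g s) a t); [| |lra].
  - intros s Hs IH. destruct (Req_dec s a) as [->|Hne]; [exact Ha|].
    assert (- g s <= 0).
    { apply (continuity_pt_le_left (fun x => - g x) a); [lra| |].
      - apply continuity_pt_opp, Hcont; [lra|exact IH].
      - intros x Hx. specialize (IH x Hx). lra. }
    specialize (Hroot s ltac:(lra)). lra.
  - intros s Hs IH. apply continuity_pt_pos_right; [|apply IH; lra].
    apply Hcont; [lra|]. intros x Hx. apply IH. lra.
Qed.

Lemma le_of_is_derive_neg_at_level f df a c :
  f a <= c ->
  (forall t, a <= t -> is_derive f t (df t)) ->
  (forall t, a <= t -> f t <= c -> df t < 0) ->
  forall t, a <= t -> f t <= c.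
Proof.
  intros Ha Hder Hneg t Ht. apply (real_induction (fun s => f s <= c) a t); [| |lra].
  - intros s Hs IH. destruct (Req_dec s a) as [->|Hne]; [exact Ha|].
    apply (continuity_pt_le_left f a); [lra| |exact IH].
    apply (is_derive_continuity_pt _ _ _ (Hder s ltac:(lra))).
  - intros s Hs IH. assert (Hfs : f s <= c) by (apply IH; lra).
    destruct (is_derive_neg_right f s (df s)) as [d [Hd Hdec]].
    + apply Hder. lra.
    + apply Hneg; [lra|exact Hfs].
    + exists d. split; [exact Hd|]. intros x Hx. specialize (Hdec x Hx). lra.
Qed.

Lemma le_of_is_derive_nonneg f df a b : a <= b ->
  (forall x, a <= x <= b -> is_derive f x (df x)) ->
  (forall x, a <= x <= b -> 0 <= df x) ->
  f a <= f b.
Proof.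
  intros Hab Hder Hnonneg.
  destruct (MVT_gen f a b df) as [c [Hc Hmvt]];
    rewrite ?Rmin_left, ?Rmax_right in * by lra.
  - intros x Hx. apply Hder. lra.
  - intros x Hx. apply (is_derive_continuity_pt _ _ _ (Hder x Hx)).
  - pose proof (Hnonneg c Hc). nra.
Qed.

Lemma gronwall_zero z dz K a b : a <= b ->
  (forall x, a <= x <= b -> is_derive z x (dz x)) ->
  (forall x, a <= x <= b -> dz x <= K * z x) ->
  (forall x, a <= x <= b -> 0 <= z x) ->
  z a = 0 -> z b = 0.
Proof.
  intros Hab Hder Hgrowth Hnonneg Ha.
  (* [- z x * exp (- K x)] is nondecreasing, and it starts at 0 *)
  set (dphi := fun x => (K * z x - dz x) * exp (- K * x)).
  assert (Hmono : - z a * exp (- K * a) <= - z b * exp (- K * b)).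
  { apply (le_of_is_derive_nonneg (fun x => - z x * exp (- K * x)) dphi); [exact Hab| |].
    - intros x Hx. unfold dphi.
      assert (Hexp : is_derive (fun y => exp (- K * y)) x (- K * exp (- K * x)))
        by (auto_derive; [exact I|ring]).
      pose proof (is_derive_mult _ _ x _ _ (is_derive_opp _ _ _ (Hder x Hx)) Hexp Rmult_comm)
        as Hprod.
      simpl in Hprod. unfold plus, mult, opp in Hprod; simpl in Hprod.
      replace ((K * z x - dz x) * exp (- K * x))
        with (- dz x * exp (- K * x) + - z x * (- K * exp (- K * x))) by ring.
      exact Hprod.
    - intros x Hx. unfold dphi. apply Rmult_le_pos; [|left; apply exp_pos].
      specialize (Hgrowth x Hx). lra. }
  rewrite Ha in Hmono. pose proof (exp_pos (- K * b)). pose proof (Hnonneg b ltac:(lra)).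
  nra.
Qed.

Definition nullfun (l1 l2 x : R) : R := hfun l1 l2 x + 2 * x.

Lemma gext_tangent l1 l2 x u th v : 0 < u -> tangent_hyp x v ->
  gext l1 l2 u (x * u) th v v
  = - nullfun l1 l2 x * vu v ^ 2 + (x * u) ^ 2 * (vth v ^ 2 + (sin th * vps v) ^ 2).
Proof.
  intros Hu Hv. unfold tangent_hyp in Hv. unfold gext, Bfun, nullfun.
  rewrite Hv. replace (x * u / u) with x by (field; lra). ring.
Qed.

Lemma spacelike_of_nullfun_neg l1 l2 x : 0 < x -> nullfun l1 l2 x < 0 ->
  spacelike_hyp l1 l2 x.
Proof.
  intros Hx Hneg u th Hu Hth v Hv Hnz. rewrite gext_tangent by assumption.
  assert (Hsin : 0 < sin th) by (apply sin_gt_0; lra).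
  assert (Hxu : 0 < (x * u) ^ 2) by (apply pow_lt; nra).
  destruct v as [a b t p]; unfold tangent_hyp in Hv; simpl in *.
  assert (0 <= t ^ 2) by apply pow2_ge_0.
  assert (0 <= (sin th * p) ^ 2) by apply pow2_ge_0.
  destruct (Req_dec a 0) as [->|Ha]; [|assert (0 < a ^ 2) by (apply pow2_gt_0; lra); nra].
  destruct (Req_dec t 0) as [->|Ht]; [|assert (0 < t ^ 2) by (apply pow2_gt_0; lra); nra].
  destruct (Req_dec p 0) as [->|Hp].
  - exfalso. apply Hnz. unfold vzero. f_equal. lra.
  - assert (0 < (sin th * p) ^ 2) by (apply pow2_gt_0, Rmult_integral_contrapositive; lra).
    nra.
Qed.

Lemma null_of_nullfun_root l1 l2 x : nullfun l1 l2 x = 0 -> null_hyp l1 l2 x.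
Proof.
  intros Hroot u th Hu Hth. exists (mkv 1 x 0 0).
  split; [unfold tangent_hyp; simpl; ring|].
  split; [intros Heq; injection Heq; lra|].
  intros [a b t p] Hw. unfold tangent_hyp in Hw. simpl in Hw. subst b.
  unfold gext, Bfun, nullfun in *. simpl.
  replace (x * u / u) with x by (field; lra). nra.
Qed.

Lemma timelike_of_nullfun_pos l1 l2 x : nullfun l1 l2 x > 0 -> timelike_hyp l1 l2 x.
Proof.
  intros Hpos u th Hu Hth. exists (mkv 1 x 0 0).
  split; [unfold tangent_hyp; simpl; ring|].
  rewrite gext_tangent by (try lra; unfold tangent_hyp; simpl; ring). simpl. nra.
Qed.

Lemma homothetic_null_geodesic l1 l2 x u : 0 < u -> nullfun l1 l2 x = 0 ->
  is_derive (fun v => x * v) u (- (1 / 2) * Bfun l1 l2 u (x * u)).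
Proof.
  intros Hu Hroot. unfold Bfun, nullfun in *.
  replace (x * u / u) with x by (field; lra).
  auto_derive; [exact I|lra].
Qed.

Lemma is_derive_homothetic_ratio l1 l2 (r : R -> R) u : 0 < u ->
  is_derive r u (- (1 / 2) * Bfun l1 l2 u (r u)) ->
  is_derive (fun v => r v / v) u (- nullfun l1 l2 (r u / u) / (2 * u)).
Proof.
  intros Hu Hr.
  replace (- nullfun l1 l2 (r u / u) / (2 * u))
    with ((- (1 / 2) * Bfun l1 l2 u (r u) * u - r u * 1) / u ^ 2)
    by (unfold Bfun, nullfun; field; lra).
  apply is_derive_div; [exact Hr|auto_derive; auto|lra].
Qed.

Section NullFunction.

Variables l1 l2 : R.
Hypotheses (Hl1 : 0 < l1) (Hl2 : 0 < l2).

Lemma nullfun_concave a x b : 0 < a -> a < x -> x < b ->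
  nullfun l1 l2 a * (b - x) + nullfun l1 l2 b * (x - a) <= nullfun l1 l2 x * (b - a).
Proof.
  intros Ha Hax Hxb.
  assert (Hgap : nullfun l1 l2 x * (b - a)
                 - (nullfun l1 l2 a * (b - x) + nullfun l1 l2 b * (x - a))
                 = (b - a) * (x - a) * (b - x) * (l2 + l1 / (a * b * x)))
    by (unfold nullfun, hfun; field; repeat split; lra).
  assert (0 < l1 / (a * b * x))
    by (apply Rdiv_lt_0_compat; [lra|repeat apply Rmult_lt_0_compat; lra]).
  assert (0 < (b - a) * (x - a) * (b - x)) by (repeat apply Rmult_lt_0_compat; lra).
  nra.
Qed.

Lemma nullfun_ge_min a x b : 0 < a -> a <= x <= b ->
  Rmin (nullfun l1 l2 a) (nullfun l1 l2 b) <= nullfun l1 l2 x.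
Proof.
  intros Ha Hx.
  pose proof (Rmin_l (nullfun l1 l2 a) (nullfun l1 l2 b)).
  pose proof (Rmin_r (nullfun l1 l2 a) (nullfun l1 l2 b)).
  destruct (Req_dec x a) as [->|]; [lra|]. destruct (Req_dec x b) as [->|]; [lra|].
  pose proof (nullfun_concave a x b Ha ltac:(lra) ltac:(lra)). nra.
Qed.

Lemma nullfun_root xS : 0 < xS -> 0 < nullfun l1 l2 xS ->
  exists xs, xS < xs /\ nullfun l1 l2 xs = 0 /\
    (forall x, xS <= x < xs -> 0 < nullfun l1 l2 x) /\
    (forall x, xs < x -> nullfun l1 l2 x < 0).
Proof.
  intros HxS HF.
  (* [x * nullfun x] is a cubic with negative leading coefficient *)
  set (P := fun x => l1 + l2 * x ^ 3 - x - 2 * x ^ 2).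
  assert (HP : forall x, 0 < x -> P x = - (x * nullfun l1 l2 x))
    by (intros x Hx; unfold P, nullfun, hfun; field; lra).
  set (X := xS + 2 + 3 / l2).
  assert (H3 : l2 * (3 / l2) = 3) by (field; lra).
  assert (0 < 3 / l2) by (apply Rdiv_lt_0_compat; lra).
  assert (HX : 3 <= l2 * X) by (unfold X; nra).
  assert (HX2 : 2 <= X) by (unfold X; lra).
  assert (HPX : 0 < P X).
  { unfold P. assert (l2 * X ^ 3 >= 3 * X ^ 2) by (simpl; nra). simpl in *. nra. }
  assert (HPS : P xS < 0) by (rewrite HP by lra; nra).
  destruct (IVT P xS X) as [z [Hz Pz]];
    [unfold P; apply derivable_continuous; reg|unfold X; lra|exact HPS|exact HPX|].
  assert (Hzs : xS < z) by (destruct Hz as [[|<-] _]; lra).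
  assert (Fz : nullfun l1 l2 z = 0) by (rewrite HP in Pz by lra; nra).
  exists z. repeat split; [exact Hzs|exact Fz| |].
  - intros x [[Hx|<-] Hxz]; [|exact HF].
    pose proof (nullfun_concave xS x z HxS Hx Hxz). rewrite Fz in *. nra.
  - intros x Hx. pose proof (nullfun_concave xS z x HxS Hzs Hx). rewrite Fz in *. nra.
Qed.

Lemma nullfun_root_growth xs y : 0 < xs -> nullfun l1 l2 xs = 0 -> xs <= y ->
  - nullfun l1 l2 y <= l2 * (xs + y) * (y - xs).
Proof.
  intros Hxs Hroot Hy.
  assert (Hdiff : nullfun l1 l2 xs - nullfun l1 l2 y
                  = (y - xs) * (- 2 - l1 / (xs * y) + l2 * (xs + y)))
    by (unfold nullfun, hfun; field; lra).
  assert (0 <= l1 / (xs * y)) by (apply Rdiv_le_0_compat; nra).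
  rewrite Hroot in Hdiff. nra.
Qed.

End NullFunction.

Section RatioDynamics.

Variables l1 l2 xS xs : R.
Hypotheses (Hl1 : 0 < l1) (Hl2 : 0 < l2) (HxS : 0 < xS) (Hxs : xS < xs)
  (Hroot : nullfun l1 l2 xs = 0)
  (Hpos : forall x, xS <= x < xs -> 0 < nullfun l1 l2 x)
  (Hneg : forall x, xs < x -> nullfun l1 l2 x < 0).

Lemma ratio_drops_to_xSigma (y : R -> R) (u0 : R) : 0 < u0 -> y u0 < xs ->
  (forall u, u0 <= u -> is_derive y u (- nullfun l1 l2 (y u) / (2 * u))) ->
  exists U, u0 <= U /\ y U <= xS.
Proof.
  intros Hu0 Hy0xs Hode. apply NNPP. intros Hnever.
  assert (Hy : forall u, u0 <= u -> xS < y u)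
    by (intros u Hu; apply Rnot_le_lt; intros Hle; apply Hnever; exists u; auto).
  set (y0 := y u0).
  assert (Hy0 : xS < y0 < xs) by (split; [apply Hy; lra|exact Hy0xs]).
  set (m := Rmin (nullfun l1 l2 xS) (nullfun l1 l2 y0)).
  assert (Hm : 0 < m) by (apply Rmin_pos; apply Hpos; lra).
  (* the slack [m/4] makes the derivative strictly negative below the level [psi u0] *)
  set (psi := fun u => y u + m / 4 * ln u).
  assert (Hpsi : forall t, u0 <= t -> psi t <= psi u0).
  { apply (le_of_is_derive_neg_at_level psi
             (fun t => - nullfun l1 l2 (y t) / (2 * t) + m / 4 * / t)); [lra| |].
    - intros t Ht. apply (is_derive_plus y (fun u => m / 4 * ln u)); [apply Hode, Ht|].
      apply is_derive_scal, is_derive_ln. lra.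
    - intros t Ht Hlevel.
      assert (Hln : ln u0 <= ln t)
        by (destruct Ht as [Ht|<-]; [left; apply ln_increasing|]; lra).
      assert (y t <= y0) by (unfold psi in Hlevel; fold y0 in Hlevel; nra).
      pose proof (nullfun_ge_min l1 l2 Hl1 Hl2 xS (y t) y0 HxS
                    ltac:(pose proof (Hy t Ht); lra)) as Hmin.
      fold m in Hmin.
      replace (- nullfun l1 l2 (y t) / (2 * t) + m / 4 * / t)
        with ((m - 2 * nullfun l1 l2 (y t)) / (4 * t)) by (field; lra).
      apply Rlt_div_l; lra. }
  set (U := u0 * exp (4 * (y0 - xS) / m)).
  assert (HlnU : ln U = ln u0 + 4 * (y0 - xS) / m)
    by (unfold U; rewrite ln_mult, ln_exp; [reflexivity|lra|apply exp_pos]).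
  assert (HuU : u0 <= U).
  { unfold U. pose proof (exp_ineq1_le (4 * (y0 - xS) / m)).
    assert (0 < 4 * (y0 - xS) / m) by (apply Rdiv_lt_0_compat; lra).
    nra. }
  pose proof (Hpsi U HuU) as HpsiU. unfold psi in HpsiU. fold y0 in HpsiU.
  rewrite HlnU in HpsiU.
  replace (m / 4 * (ln u0 + 4 * (y0 - xS) / m)) with (m / 4 * ln u0 + (y0 - xS))
    in HpsiU by (field; lra).
  pose proof (Hy U HuU). lra.
Qed.

Lemma ratio_constant_after_touch (y : R -> R) (a u1 : R) : 0 <= a ->
  (forall u, a < u -> is_derive y u (- nullfun l1 l2 (y u) / (2 * u))) ->
  (forall u, a < u -> xs <= y u) ->
  a < u1 -> y u1 = xs ->
  forall t, a < t -> y t = xs.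
Proof.
  intros Ha Hode Hyge Hu1 Hyu1 t Ht.
  assert (Hmono : forall s t, a < s <= t -> y s <= y t).
  { intros s t' Hst. apply (le_of_is_derive_nonneg y (fun u => - nullfun l1 l2 (y u) / (2 * u)));
      [lra|intros x Hx; apply Hode; lra|].
    intros x Hx. apply Rdiv_le_0_compat; [|lra].
    destruct (Hyge x ltac:(lra)) as [Hlt|<-]; [pose proof (Hneg _ Hlt)|]; lra. }
  destruct (Rle_lt_dec t u1) as [Htu1|Htu1].
  - pose proof (Hmono t u1 ltac:(lra)). pose proof (Hyge t Ht). lra.
  - (* after [u1], [y - xs] vanishes by Gronwall; [y t] bounds [y] on [u1, t] *)
    enough (y t - xs = 0) by lra.
    apply (gronwall_zero (fun v => y v - xs) (fun v => - nullfun l1 l2 (y v) / (2 * v))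
             (l2 * (xs + y t) / (2 * u1)) u1 t); [lra| | | |lra].
    + intros x Hx. replace (- nullfun l1 l2 (y x) / (2 * x))
        with (- nullfun l1 l2 (y x) / (2 * x) - 0) by ring.
      apply (is_derive_minus y (fun _ => xs)); [apply Hode; lra|auto_derive; auto].
    + intros x Hx.
      pose proof (Hyge x ltac:(lra)). pose proof (Hmono x t ltac:(lra)).
      pose proof (nullfun_root_growth l1 l2 Hl1 xs (y x) ltac:(lra) Hroot ltac:(lra)).
      assert (0 <= l2 * ((y t - y x) * (y x - xs)))
        by (apply Rmult_le_pos; [lra|apply Rmult_le_pos; lra]).
      assert (Hbound : - nullfun l1 l2 (y x) <= l2 * (xs + y t) * (y x - xs)) by nra.
      apply Rle_div_l; [lra|].
      replace (l2 * (xs + y t) / (2 * u1) * (y x - xs) * (2 * x))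
        with (l2 * (xs + y t) * (y x - xs) * (x / u1)) by (field; lra).
      assert (1 <= x / u1) by (apply Rle_div_r; lra).
      assert (0 <= l2 * (xs + y t) * (y x - xs)) by (apply Rmult_le_pos; nra).
      nra.
    + intros x Hx. pose proof (Hyge x ltac:(lra)). lra.
Qed.

Lemma reaches_matching_surface (r : R -> R) (u0 : R) : 0 < u0 ->
  xS * u0 < r u0 < xs * u0 ->
  (forall u, u0 <= u -> (forall s, u0 <= s < u -> xS * s < r s) ->
     is_derive r u (- (1 / 2) * Bfun l1 l2 u (r u))) ->
  exists u1, u0 < u1 /\ r u1 = xS * u1.
Proof.
  intros Hu0 [Habove Hbelow] Hder. apply NNPP. intros Hnever.
  assert (Hgap : forall u, u0 <= u -> xS * u < r u).
  { intros u Hu.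
    enough (0 < r u - xS * u) by lra.
    apply (pos_of_no_root (fun v => r v - xS * v) u0); [lra| | |exact Hu].
    - intros t Ht Hbefore. apply continuity_pt_minus; [|reg].
      apply (is_derive_continuity_pt r t (- (1 / 2) * Bfun l1 l2 t (r t))), Hder; [exact Ht|].
      intros s Hs. specialize (Hbefore s Hs). lra.
    - intros t Ht Heq. apply Hnever. exists t. split; lra. }
  destruct (ratio_drops_to_xSigma (fun u => r u / u) u0) as [U [HU Hdrop]].
  - exact Hu0.
  - apply Rlt_div_l; lra.
  - intros u Hu. apply is_derive_homothetic_ratio; [lra|].
    apply Hder; [exact Hu|]. intros s Hs. apply Hgap. lra.
  - apply Rle_div_l in Hdrop; [|lra]. pose proof (Hgap U HU). lra.
Qed.

Lemma escaping_lies_above (r : R -> R) (a : R) : 0 <= a ->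
  (forall u, a < u -> xS * u < r u /\ is_derive r u (- (1 / 2) * Bfun l1 l2 u (r u))) ->
  (exists u, a < u /\ r u <> xs * u) ->
  forall u, a < u -> xs * u < r u.
Proof.
  intros Ha Hr [w [Hw Hrw]] u1 Hu1.
  assert (Hge : forall u, a < u -> xs * u <= r u).
  { intros u Hu. apply Rnot_lt_le. intros Hlt.
    destruct (reaches_matching_surface r u) as [u2 [Hu2 Hhit]].
    - lra.
    - split; [apply Hr; exact Hu|exact Hlt].
    - intros v Hv _. apply Hr. lra.
    - destruct (Hr u2 ltac:(lra)) as [Habove _]. lra. }
  destruct (Hge u1 Hu1) as [|Heq]; [assumption|exfalso].
  assert (Hconst := ratio_constant_after_touch (fun u => r u / u) a u1 Ha).
  apply Hrw. enough (Hyw : r w / w = xs) by (rewrite <- Hyw; field; lra).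
  apply Hconst; [| |exact Hu1| |exact Hw].
  - intros u Hu. apply is_derive_homothetic_ratio; [lra|apply Hr, Hu].
  - intros u Hu. apply Rle_div_r; [lra|apply Hge, Hu].
  - rewrite <- Heq. field. lra.
Qed.

End RatioDynamics.

Section ModelParameters.

Variables k beta delta Rb : R.
Hypotheses (Hbeta : 0 < beta) (Hdelta : 0 < delta)
  (Hdelta_eq : delta ^ 3 + k * delta - 3 * beta / 2 = 0)
  (HRb : 0 < Rb) (Hsqrt_arg : 0 < 1 - k * Rb ^ 2).

Let S := sqrt (1 - k * Rb ^ 2) + delta * Rb.

Lemma inv_Ck_pos : 0 < S.
Proof. unfold S. pose proof (sqrt_pos (1 - k * Rb ^ 2)). nra. Qed.

Lemma model_parameters_pos :
  0 < lambda1 k beta delta Rb /\ 0 < lambda2 k beta delta Rb /\ 0 < xSigma k delta Rb.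
Proof.
  pose proof inv_Ck_pos as HS.
  unfold lambda1, lambda2, xSigma. change (Ck k delta Rb) with (1 / S).
  repeat split.
  - replace (beta * Rb ^ 3 / (1 / S)) with (beta * Rb ^ 3 * S) by (field; lra).
    pose proof (pow_lt Rb 3 HRb). repeat apply Rmult_lt_0_compat; lra.
  - replace (beta * (1 / S) ^ 2 / (2 * delta ^ 3)) with (beta / (2 * delta ^ 3 * S ^ 2))
      by (field; lra).
    apply Rdiv_lt_0_compat; [lra|].
    pose proof (pow_lt delta 3 Hdelta). pose proof (pow_lt S 2 HS).
    repeat apply Rmult_lt_0_compat; lra.
  - replace (Rb * delta / (1 / S)) with (Rb * delta * S) by (field; lra).
    repeat apply Rmult_lt_0_compat; lra.
Qed.

Lemma nullfun_xSigma :
  nullfun (lambda1 k beta delta Rb) (lambda2 k beta delta Rb) (xSigma k delta Rb) = S ^ 2.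
Proof.
  pose proof inv_Ck_pos as HS.
  assert (Hs2 : sqrt (1 - k * Rb ^ 2) ^ 2 = 1 - k * Rb ^ 2)
    by (apply pow2_sqrt; lra).
  unfold nullfun, hfun, lambda1, lambda2, xSigma. change (Ck k delta Rb) with (1 / S).
  replace beta with (2 * (delta ^ 3 + k * delta) / 3) by lra.
  field_simplify; [|repeat split; lra].
  replace (-3 * delta ^ 3 * Rb ^ 2 + 6 * delta ^ 2 * Rb * S - 3 * delta * k * Rb ^ 2
           + 3 * delta) with (S ^ 2 * (3 * delta)) by (unfold S; nra).
  field. lra.
Qed.

End ModelParameters.

Theorem mainTheorem5 (k beta delta Rb : R)
  (Hk : k = -1 \/ k = 0 \/ k = 1)
  (Hbeta : 0 < beta)
  (Hdelta : 0 < delta)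
  (Hdelta_eq : delta ^ 3 + k * delta - 3 * beta / 2 = 0)
  (HRb : 0 < Rb)
  (HRb1 : k = 1 -> Rb < 1) :
  let xS := xSigma k delta Rb in
  let l1 := lambda1 k beta delta Rb in
  let l2 := lambda2 k beta delta Rb in
  exists xstar : R,
    xS < xstar /\
    (* causal character of the homothetic hypersurfaces r = x u *)
    (forall x, xstar < x -> spacelike_hyp l1 l2 x) /\
    null_hyp l1 l2 xstar /\
    (forall x, xS < x < xstar -> timelike_hyp l1 l2 x) /\
    (* comparison with the exterior apparent horizon *)
    (forall xAH, Rb < RAH k delta -> xS < xAH -> hfun l1 l2 xAH = 0 ->
       xAH < xstar) /\
    (* r = xstar u is an ingoing radial null geodesic *)
    (forall u, 0 < u ->
       is_derive (fun v => xstar * v) u (- (1 / 2) * Bfun l1 l2 u (xstar * u))) /\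
    (* solutions starting below r = xstar u reach the matching surface *)
    (forall (r : R -> R) (u0 : R), 0 < u0 ->
       xS * u0 < r u0 < xstar * u0 ->
       (forall u, u0 <= u -> (forall s, u0 <= s < u -> xS * s < r s) ->
          is_derive r u (- (1 / 2) * Bfun l1 l2 u (r u))) ->
       exists u1, u0 < u1 /\ r u1 = xS * u1) /\
    (* every other ingoing radial null geodesic escaping to null infinity
       lies above r = xstar u *)
    (forall (r : R -> R) (a : R), 0 <= a ->
       (forall u, a < u ->
          xS * u < r u /\ is_derive r u (- (1 / 2) * Bfun l1 l2 u (r u))) ->
       is_lim r p_infty p_infty ->
       (exists u, a < u /\ r u <> xstar * u) ->
       forall u, a < u -> xstar * u < r u).
Proof.
  intros xS l1 l2.
  assert (Hsqrt_arg : 0 < 1 - k * Rb ^ 2).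
  { pose proof (pow2_ge_0 Rb).
    destruct Hk as [-> | [-> | ->]]; [lra|lra|]. specialize (HRb1 eq_refl). simpl; nra. }
  destruct (model_parameters_pos k beta delta Rb Hbeta Hdelta HRb) as [Hl1 [Hl2 HxS]].
  fold l1 l2 xS in Hl1, Hl2, HxS.
  assert (HFxS : 0 < nullfun l1 l2 xS).
  { unfold l1, l2, xS. rewrite nullfun_xSigma by assumption.
    apply pow_lt. apply inv_Ck_pos; assumption. }
  destruct (nullfun_root l1 l2 Hl1 Hl2 xS HxS HFxS) as [xs [Hxs [Hroot [Hpos Hneg]]]].
  exists xs. split; [exact Hxs|]. split; [|split; [|split; [|split; [|split; [|split]]]]].
  - intros x Hx. apply spacelike_of_nullfun_neg; [lra|apply Hneg, Hx].
  - apply null_of_nullfun_root, Hroot.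
  - intros x Hx. apply timelike_of_nullfun_pos, Hpos. lra.
  - (* [Rb < RAH] only guarantees that a horizon exists; here it is given *)
    intros xAH _ HAH Hh. apply Rnot_le_lt. intros Hle.
    assert (HF : nullfun l1 l2 xAH = 2 * xAH) by (unfold nullfun; rewrite Hh; ring).
    destruct Hle as [Hlt|<-]; [pose proof (Hneg _ Hlt)|]; lra.
  - intros u Hu. apply homothetic_null_geodesic; assumption.
  - intros r u0. apply (reaches_matching_surface l1 l2 xS); assumption.
  -
    intros r a Ha Hr _. apply (escaping_lies_above l1 l2 xS); assumption.
Qed.
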